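(* Let $(\mathfrak M,\mathscr A)$ be a quasi-differentiable Banach manifold (modelled on $X$) with $C^1$-kernel $\mathfrak M_0$ (modelled on $X_0$) and inner $C^1$-kernel $\mathfrak M_1$, and let $\eta\in\mathfrak M_1$. Then for any two charts $(\mathcal U,\varphi),(\mathcal V,\psi)\in\mathscr A$ with $\eta\in\mathcal U\cap\mathcal V$, $\mathcal T^0_{\eta,\varphi}(\mathfrak M)=\mathcal T^0_{\eta,\psi}(\mathfrak M)$. Consequently, for every chart $(\mathcal U,\varphi)\in\mathscr A$ with $\eta\in\mathcal U$, $\mathcal T^0_\eta(\mathfrak M)=\mathcal T^0_{\eta,\varphi}(\mathfrak M)$ and $\varphi'(\eta)\mathcal T^0_\eta(\mathfrak M)=X_0$.
   Context: Densely embedded spaces and the class $\mathfrak C^k$. For Banach spaces $X$ and $X_0$, $X_0$ is a densely embedded Banach subspace of $X$ if $X_0$ is a dense linear subspace of $X$ and there is $C>0$ with $\|x\|_X\le C\|x\|_{X_0}$ for $x\in X_0$. For such $X_0\subseteq X$, a Banach space $Y$, an open set $U_0\subseteq X_0$ and an integer $k\ge1$, $\mathfrak C^k(U_0;X,Y)$ denotes the set of maps $F:U_0\to Y$ such that (i) for each $x_0\in U_0$ there are bounded symmetric $j$-linear maps $F^{(j)}(x_0):X^j\to Y$, $1\le j\le k$, with $\|F(x)-F(x_0)-\sum_{j=1}^k\frac1{j!}F^{(j)}(x_0)(x-x_0,\dots,x-x_0)\|_Y/\|x-x_0\|_{X_0}^k\to0$ as $\|x-x_0\|_{X_0}\to0$,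 and (ii) $x\mapsto F^{(j)}(x)$ is continuous from $U_0$ (with the $X_0$-topology) into the space $L^j(X,Y)$ of bounded $j$-linear maps. We write $F'=F^{(1)}$. Embedded submanifolds and quasi-differentiable manifolds. Let $\mathfrak M,\mathfrak M_0$ be topological Banach manifolds modelled on $X$, $X_0$, let $\mathscr A$ be a family of local charts of $\mathfrak M$, and $k\ge1$. $\mathfrak M_0$ is a $C^k$-embedded Banach submanifold of $\mathfrak M$ with respect to $\mathscr A$ if: (D1) $X_0$ is a densely embedded Banach subspace of $X$; (D2) $\mathfrak M_0\subseteq\mathfrak M$ and $\mathcal U\cap\mathfrak M_0$ is open in $\mathfrak M_0$ for every open $\mathcal U\subseteq\mathfrak M$; (D3) the domains of the charts of $\mathscr A$ cover $\mathfrak M$; (D4) for $\eta\in\mathfrak M_0$ and $(\mathcal U,\varphi)\in\mathscr A$ with $\eta\in\mathcal U$, $(\mathcal U_0,\varphi|_{\mathcal U_0})$ with $\mathcal U_0:=\mathcal U\cap\mathfrak M_0$ is a local chart of $\mathfrak M_0$; (D5) for $\eta\in\mathfrak M_0$ and $(\mathcal U,\varphi),(\mathcal V,\psi)\in\mathscr A$ with $\eta\in\mathcal U\cap\mathcal V$, $\psi\circ\varphi^{-1}\in\mathfrak C^k(\varphi(\mathcal U_0\cap\mathcal V_0);X,X)$ and $\varphi\circ\psi^{-1}\in\mathfrak C^k(\psi(\mathcal U_0\cap\mathcal V_0);X,X)$. $(\mathfrak M,\mathfrak M_0,\mathscr A)$ is inward spreadable if there is a Banach manifold $\mathfrak M_1\subseteq\mathfrak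 M_0$, modelled on a Banach space $X_1$, which is a $C^1$-embedded Banach submanifold of $\mathfrak M_0$ with respect to the restrictions to $\mathfrak M_0$ of the charts of $\mathscr A$ ($\mathfrak M_1$ an inner $C^1$-kernel); outward spreadable if there is a Banach manifold $\widetilde{\mathfrak M}\supseteq\mathfrak M$ with a chart family $\widetilde{\mathscr A}$ whose restrictions to $\mathfrak M$ form $\mathscr A$ such that $\mathfrak M$ is a $C^1$-embedded Banach submanifold of $\widetilde{\mathfrak M}$. If both hold, $(\mathfrak M,\mathscr A)$ is a quasi-differentiable Banach manifold with $C^1$-kernel $\mathfrak M_0$. Tangent vectors. For $\eta\in\mathfrak M_0$, $\mathcal T_\eta(\mathfrak M)$ is the set of tangent vectors $f'(0)$ (acting on suitable real functions $F$ by $F\mapsto(F\circ f)'(0)$) of curves $f$ through $\eta$ continuously differentiable at $0$ in chart coordinates, and for a chart $\varphi\in\mathscr A$ at $\eta$, $\varphi'(\eta):\mathcal T_\eta(\mathfrak M)\to X$ is the induced linear bijection $f'(0)\mapsto(\varphi\circ\psi^{-1})'(\psi(\eta))(\psi\circ f)'(0)$. For a chart $(\mathcal U,\varphi)\in\mathscr A$ at $\eta$, $\mathcal T^0_{\eta,\varphi}(\mathfrak M)$ is the set of $f'(0)$ for curves $f:(-\varepsilon,\varepsilon)\to\mathfrak M_0$ with $f(0)=\eta$ such that $t\mapsto\varphi(f(t))$ is continuously differentiable on $(-\varepsilon,\varepsilon)$ in the norm of $X_0$; $\mathcal T^0_\eta(\mathfrak M)=\bigcup_{(\mathcal U,\varphi)}\mathcal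 T^0_{\eta,\varphi}(\mathfrak M)$ (union over charts of $\mathscr A$ at $\eta$). *)

(* Conventions:
   - All model Banach spaces are represented as linear subspaces S of one
     ambient normed space V, each with its own norm n : V -> R (only its values
     on S matter).  Densely embedded means S0 included in S, dense, with
     n x <= C * n0 x.
   - All manifolds are subsets M of one carrier type T, each with its own
     topology given by its family O of open sets.
   - A chart is a pair (U, phi) with phi : T -> V (only its values on U matter). *)
From HB Require Import structures.
From mathcomp Require Import all_boot all_order all_algebra.
From mathcomp Require Import all_classical all_reals all_analysis.
Import Order.TTheory GRing.Theory Num.Theory.
Set Implicit Arguments. Unset Strict Implicit. Unset Printing Implicit Defensive.
Local Open Scope classical_set_scope.
Local Open Scope ring_scope.

Section QDiff.
Context {R : realType} {V : normedModType R} {T : Type}.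

Definition banach (S : set V) (n : V -> R) : Prop :=
  [/\ [/\ S 0, (forall x y, S x -> S y -> S (x + y)) &
          (forall (a : R) x, S x -> S (a *: x))],
      [/\ (forall x, S x -> 0 <= n x /\ (n x = 0 -> x = 0)),
          (forall (a : R) x, S x -> n (a *: x) = `|a| * n x) &
          (forall x y, S x -> S y -> n (x + y) <= n x + n y)] &
      (forall u : nat -> V, (forall k, S (u k)) ->
         (forall e, 0 < e -> exists N, forall m k, (N <= m)%N -> (N <= k)%N ->
              n (u m - u k) < e) ->
         exists l, S l /\ forall e, 0 < e -> exists N, forall k, (N <= k)%N ->
              n (u k - l) < e)].

Definition dense_emb (S0 : set V) (n0 : V -> R) (S : set V) (n : V -> R) : Prop :=
  [/\ banach S0 n0, banach S n, S0 `<=` S,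
      (forall x, S x -> forall e, 0 < e -> exists y, S0 y /\ n (x - y) < e) &
      exists C, 0 < C /\ forall x, S0 x -> n x <= C * n0 x].

Definition nopen (S : set V) (n : V -> R) (A : set V) : Prop :=
  A `<=` S /\ forall x, A x -> exists e, 0 < e /\
     forall y, S y -> n (y - x) < e -> A y.

Definition topo (M : set T) (O : set (set T)) : Prop :=
  [/\ (forall U, O U -> U `<=` M), O M,
      (forall F : set (set T), F `<=` O -> O (\bigcup_(U in F) U)) &
      (forall U W, O U -> O W -> O (U `&` W))].

(* (U, phi) is a local chart of the topological manifold (M, O) modelled on
   (S, n): U open, phi a homeomorphism of U onto an open subset of S. *)
Definition chart (M : set T) (O : set (set T)) (S : set V) (n : V -> R)
  (c : set T * (T -> V)) : Prop :=
  [/\ O c.1,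
      (forall p q, c.1 p -> c.1 q -> c.2 p = c.2 q -> p = q),
      (forall p, c.1 p -> S (c.2 p)) &
      (forall W, W `<=` c.1 -> (O W <-> nopen S n (c.2 @` W)))].

Definition manifold (M : set T) (O : set (set T)) (S : set V) (n : V -> R) : Prop :=
  [/\ banach S n, topo M O &
      forall p, M p -> exists c, chart M O S n c /\ c.1 p].

(* DF is the derivative witnessing F in frak C^1(D; X, Y), where the domain D
   lies in X0 = (S0, n0), X = (SX, nX), Y = (SY, nY). *)
Definition C1wit (S0 : set V) (n0 : V -> R) (SX : set V) (nX : V -> R)
  (SY : set V) (nY : V -> R) (D : set V) (F : V -> V) (DF : V -> V -> V) : Prop :=
  [/\ (forall x, D x -> SY (F x)) /\
      (forall x, D x -> forall h, SX h -> SY (DF x h)),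
      (forall x, D x -> forall h k (a : R), SX h -> SX k ->
          DF x (h + a *: k) = DF x h + a *: DF x k),
      (forall x, D x -> exists C, forall h, SX h -> nY (DF x h) <= C * nX h),
      (forall x0, D x0 -> forall e, 0 < e -> exists d, 0 < d /\
          forall x, D x -> n0 (x - x0) < d ->
            nY (F x - F x0 - DF x0 (x - x0)) <= e * n0 (x - x0)) &
      (forall x0, D x0 -> forall e, 0 < e -> exists d, 0 < d /\
          forall x, D x -> n0 (x - x0) < d ->
            forall h, SX h -> nY (DF x h - DF x0 h) <= e * nX h)].

Definition frakC1 (S0 : set V) (n0 : V -> R) (SX : set V) (nX : V -> R)
  (SY : set V) (nY : V -> R) (D : set V) (F : V -> V) : Prop :=
  exists DF, C1wit S0 n0 SX nX SY nY D F DF.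

(* c'.2 o c.2^{-1} belongs to frak C^1(c.2(U0 & V0); X, X), U0 = c.1 & Ms,
   V0 = c'.1 & Ms, where X = (Sb, nb) and X0 = (Ss, ns). *)
Definition trans_C1 (Ms : set T) (Ss : set V) (ns : V -> R) (Sb : set V)
  (nb : V -> R) (c c' : set T * (T -> V)) : Prop :=
  exists F, (forall p, c.1 p -> c'.1 p -> Ms p -> F (c.2 p) = c'.2 p) /\
    frakC1 Ss ns Sb nb Sb nb (c.2 @` (c.1 `&` c'.1 `&` Ms)) F.

Definition embedded (Mb : set T) (Ob : set (set T)) (Sb : set V) (nb : V -> R)
  (Ab : set (set T * (T -> V)))
  (Ms : set T) (Os : set (set T)) (Ss : set V) (ns : V -> R) : Prop :=
  [/\ [/\ manifold Mb Ob Sb nb, manifold Ms Os Ss ns &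
      (forall c, Ab c -> chart Mb Ob Sb nb c)],
      dense_emb Ss ns Sb nb,
      Ms `<=` Mb /\ (forall U, Ob U -> Os (U `&` Ms)),
      (forall p, Mb p -> exists c, Ab c /\ c.1 p) /\
      (forall p c, Ms p -> Ab c -> c.1 p -> chart Ms Os Ss ns (c.1 `&` Ms, c.2)) &
      (forall p c c', Ms p -> Ab c -> Ab c' -> c.1 p -> c'.1 p ->
                  trans_C1 Ms Ss ns Sb nb c c' /\ trans_C1 Ms Ss ns Sb nb c' c)].

Definition restr_charts (A : set (set T * (T -> V))) (M0 : set T) :
  set (set T * (T -> V)) := [set (c.1 `&` M0, c.2) | c in A].

Definition deriv_on (n : V -> R) (eps : R) (g : R -> V) (d : R -> V) : Prop :=
  forall t, `|t| < eps -> forall e, 0 < e -> exists del, 0 < del /\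
    forall s, `|s| < del -> `|t + s| < eps ->
      n (g (t + s) - g t - s *: d t) <= e * `|s|.

Definition cont_at (n : V -> R) (eps : R) (d : R -> V) (t : R) : Prop :=
  forall e, 0 < e -> exists del, 0 < del /\
    forall s, `|s - t| < del -> `|s| < eps -> n (d s - d t) < e.

Definition C1_at0 (S : set V) (n : V -> R) (c : set T * (T -> V))
  (f : R -> T) (d : R -> V) : Prop :=
  exists eps, 0 < eps /\ [/\ (forall t, `|t| < eps -> c.1 (f t)),
    (forall t, `|t| < eps -> S (d t)),
    deriv_on n eps (fun t => c.2 (f t)) d & cont_at n eps d 0].

(* phi'(eta) f'(0) = v, for the chart c = (U, phi) of A at eta, computed as
   (phi o psi^{-1})'(psi eta) (psi o f)'(0) via a chart (V, psi) of A in whose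
   coordinates f is continuously differentiable at 0. *)
Definition tmap (A : set (set T * (T -> V))) (M0 : set T) (S0 : set V)
  (n0 : V -> R) (SX : set V) (nX : V -> R) (eta : T)
  (c : set T * (T -> V)) (f : R -> T) (v : V) : Prop :=
  f 0 = eta /\ exists c' d, [/\ A c', c'.1 eta, C1_at0 SX nX c' f d &
    exists F DF, [/\ (forall p, c.1 p -> c'.1 p -> M0 p -> F (c'.2 p) = c.2 p),
       C1wit S0 n0 SX nX SX nX (c'.2 @` (c.1 `&` c'.1 `&` M0)) F DF &
       v = DF (c'.2 eta) (d 0)]].

(* the tangent vector f'(0) at eta, as the class of curves with the same
   tangent vector (same image under phi'(eta) for every chart of A at eta) *)
Definition tvec (A : set (set T * (T -> V))) (M0 : set T) (S0 : set V)
  (n0 : V -> R) (SX : set V) (nX : V -> R) (eta : T) (f : R -> T) : set (R -> T) :=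
  [set g | forall c v, A c -> c.1 eta ->
     (tmap A M0 S0 n0 SX nX eta c f v <-> tmap A M0 S0 n0 SX nX eta c g v)].

Definition adm0 (M0 : set T) (S0 : set V) (n0 : V -> R) (eta : T)
  (c : set T * (T -> V)) (f : R -> T) : Prop :=
  f 0 = eta /\ exists eps d, 0 < eps /\
   [/\ (forall t, `|t| < eps -> M0 (f t) /\ c.1 (f t)),
       (forall t, `|t| < eps -> S0 (d t)),
       deriv_on n0 eps (fun t => c.2 (f t)) d &
       (forall t, `|t| < eps -> cont_at n0 eps d t)].

Definition T0c (A : set (set T * (T -> V))) (M0 : set T) (S0 : set V)
  (n0 : V -> R) (SX : set V) (nX : V -> R) (eta : T) (c : set T * (T -> V)) :
  set (set (R -> T)) :=
  [set tvec A M0 S0 n0 SX nX eta f | f in adm0 M0 S0 n0 eta c].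

Definition T0 (A : set (set T * (T -> V))) (M0 : set T) (S0 : set V)
  (n0 : V -> R) (SX : set V) (nX : V -> R) (eta : T) : set (set (R -> T)) :=
  \bigcup_(c in [set c | A c /\ c.1 eta]) T0c A M0 S0 n0 SX nX eta c.

End QDiff.

(* Over the inner kernel M1 the transition maps of A are C^1 into X0.  So at eta, the
   derivative DF of a transition map agrees on the dense subspace X1 with an X0-valued
   bounded map; by continuity DF maps X0 into X0, and the chain rule holds on X0.  A curve
   that is C^1 in X0 in one chart therefore has the same tangent vector as the straight
   line in any other chart with the transported (X0-valued) velocity, and these lines
   realise every velocity in X0. *)
From HB Require Import structures.
From mathcomp Require Import all_boot all_order all_algebra.
From mathcomp Require Import all_classical all_reals all_analysis.
From mathcomp Require Import lra.
Import Order.TTheory GRing.Theory Num.Theory.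
Local Open Scope classical_set_scope.
Local Open Scope ring_scope.

Set Implicit Arguments. Unset Strict Implicit. Unset Printing Implicit Defensive.

Section BanachSpace.
Context {R : realType} {V : normedModType R}.
Variables (S : set V) (n : V -> R).
Hypothesis hS : banach S n.

Lemma banach_mem0 : S 0.
Proof. by case: hS => [[]]. Qed.

Lemma banach_memD x y : S x -> S y -> S (x + y).
Proof. by case: hS => [[_ h _] _ _]; apply: h. Qed.

Lemma banach_memZ (a : R) x : S x -> S (a *: x).
Proof. by case: hS => [[_ _ h] _ _]; apply: h. Qed.

Lemma banach_memN x : S x -> S (- x).
Proof. by move=> Sx; rewrite -scaleN1r; apply: banach_memZ. Qed.

Lemma banach_memB x y : S x -> S y -> S (x - y).
Proof. by move=> Sx Sy; apply: banach_memD => //; apply: banach_memN. Qed.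

Lemma banach_norm_ge0 x : S x -> 0 <= n x.
Proof. by case: hS => _ [h _ _] _ /h []. Qed.

Lemma banach_norm_eq0 x : S x -> n x = 0 -> x = 0.
Proof. by case: hS => _ [h _ _] _ /h []. Qed.

Lemma banach_normZ (a : R) x : S x -> n (a *: x) = `|a| * n x.
Proof. by case: hS => _ [_ h _] _; apply: h. Qed.

Lemma banach_normD x y : S x -> S y -> n (x + y) <= n x + n y.
Proof. by case: hS => _ [_ _ h] _; apply: h. Qed.

Lemma banach_norm0 : n 0 = 0.
Proof. by rewrite -(scale0r 0) (banach_normZ _ banach_mem0) normr0 mul0r. Qed.

Lemma banach_normN x : S x -> n (- x) = n x.
Proof. by move=> Sx; rewrite -scaleN1r banach_normZ // normrN normr1 mul1r. Qed.

Lemma banach_normB x y : S x -> S y -> n (x - y) <= n x + n y.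
Proof.
by move=> Sx Sy; rewrite -(banach_normN Sy) banach_normD //; apply: banach_memN.
Qed.

Lemma banach_eq x y : S x -> S y -> (forall e, 0 < e -> n (x - y) <= e) -> x = y.
Proof.
move=> Sx Sy small; apply/eqP; rewrite -subr_eq0; apply/eqP.
apply: banach_norm_eq0; first exact: banach_memB.
apply/eqP; rewrite eq_le banach_norm_ge0 ?andbT; last exact: banach_memB.
by apply/ler_addgt0Pr => e e0; rewrite add0r; apply: small.
Qed.

End BanachSpace.

Section LineDerivatives.
Context {R : realType} {V : normedModType R}.
Implicit Types (S : set V) (n : V -> R).

Definition deriv_at0 n (u : R -> V) (a : V) : Prop :=
  forall e, 0 < e -> exists2 d, 0 < d &
    forall s, `|s| < d -> n (u s - s *: a) <= e * `|s|.

Lemma deriv_at0_unique S n (u u' : R -> V) a b d0 :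
  banach S n -> S a -> S b -> 0 < d0 ->
  (forall s, `|s| < d0 -> S (u s) /\ u s = u' s) ->
  deriv_at0 n u a -> deriv_at0 n u' b -> a = b.
Proof.
move=> hS Sa Sb d00 uu' ua u'b; apply: (banach_eq hS) => // e e0.
have e20 : 0 < e / 2 by rewrite divr_gt0.
have [d1 d10 h1] := ua _ e20; have [d2 d20 h2] := u'b _ e20.
pose m := Num.min d0 (Num.min d1 d2); pose s := m / 2.
have m0 : 0 < m by rewrite !lt_min d00 d10 d20.
have s0 : 0 < s by rewrite divr_gt0.
have : s < m by rewrite /s; lra.
rewrite !lt_min -(gtr0_norm s0) => /and3P [sd0 sd1 sd2].
have [Su uu's] := uu' _ sd0.
have Su' : S (u' s) by rewrite -uu's.
have diff : s *: (a - b) = (u' s - s *: b) - (u s - s *: a).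
  by rewrite uu's scalerBr opprB [RHS]addrC addrA subrK.
have := banach_normB hS (banach_memB hS Su' (banach_memZ hS s Sb))
  (banach_memB hS Su (banach_memZ hS s Sa)).
rewrite -diff (banach_normZ hS _ (banach_memB hS Sa Sb)).
move=> /le_trans/(_ (lerD (h2 _ sd2) (h1 _ sd1))).
by rewrite -mulrDl -splitr mulrC gtr0_norm // ler_pM2r.
Qed.

Lemma deriv_at0_bound S n (u : R -> V) b d0 :
  banach S n -> S b -> 0 < d0 -> (forall s, `|s| < d0 -> S (u s)) ->
  deriv_at0 n u b ->
  exists2 d, 0 < d & forall s, `|s| < d -> n (u s) <= (1 + n b) * `|s|.
Proof.
move=> hS Sb d00 Su ub; have [d1 d10 h1] := ub 1 ltr01.
exists (Num.min d0 d1) => [|s]; first by rewrite lt_min d00 d10.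
rewrite lt_min => /andP [sd0 sd1].
have Sk : S (u s - s *: b) := banach_memB hS (Su _ sd0) (banach_memZ hS s Sb).
rewrite -[u s](subrK (s *: b)) mulrDl mul1r.
apply: le_trans (banach_normD hS Sk (banach_memZ hS s Sb)) _.
rewrite (banach_normZ hS _ Sb) [`|s| * _]mulrC lerD //.
by have := h1 _ sd1; rewrite mul1r.
Qed.

Lemma deriv_at0_dominated S n nX (u : R -> V) a C d0 :
  banach S n -> 0 < C -> (forall k, S k -> nX k <= C * n k) -> S a -> 0 < d0 ->
  (forall s, `|s| < d0 -> S (u s)) -> deriv_at0 n u a -> deriv_at0 nX u a.
Proof.
move=> hS C0 dom Sa d00 Su ua e e0.
have [d d0' hd] := ua (e / C) (divr_gt0 e0 C0).
exists (Num.min d0 d) => [|s]; first by rewrite lt_min d00 d0'.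
rewrite lt_min => /andP [sd0 sd].
have Sk : S (u s - s *: a) := banach_memB hS (Su _ sd0) (banach_memZ hS s Sa).
apply: le_trans (dom _ Sk) _; apply: le_trans (ler_wpM2l (ltW C0) (hd _ sd)) _.
by rewrite mulrA [C * _]mulrC divfK ?gt_eqF.
Qed.

Lemma deriv_at0_line n (x h : V) : n 0 = 0 -> deriv_at0 n (fun s => x + s *: h - x) h.
Proof.
move=> n0 e e0; exists 1 => // s _.
by rewrite [x + _]addrC addrK subrr n0 mulr_ge0 // ltW.
Qed.

Lemma deriv_on_at0 n eps (g : R -> V) d : 0 < eps ->
  deriv_on n eps g d -> deriv_at0 n (fun s => g s - g 0) (d 0).
Proof.
move=> eps0 gd e e0; have [|dl [dl0 h]] := gd 0 _ e e0; first by rewrite normr0.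
exists (Num.min dl eps) => [|s]; first by rewrite lt_min dl0 eps0.
by rewrite lt_min => /andP [s1 s2]; have := h s s1; rewrite add0r; apply.
Qed.

Lemma deriv_on_dominated S n nX C eps (g : R -> V) d :
  banach S n -> 0 < C -> (forall k, S k -> nX k <= C * n k) ->
  (forall t, `|t| < eps -> S (g t)) -> (forall t, `|t| < eps -> S (d t)) ->
  deriv_on n eps g d -> deriv_on nX eps g d.
Proof.
move=> hS C0 dom Sg Sd gd t ht e e0.
have [dl [dl0 h]] := gd t ht (e / C) (divr_gt0 e0 C0).
exists dl; split => // s hs hts.
have Sk : S (g (t + s) - g t - s *: d t) :=
  banach_memB hS (banach_memB hS (Sg _ hts) (Sg _ ht)) (banach_memZ hS s (Sd _ ht)).
apply: le_trans (dom _ Sk) _; apply: le_trans (ler_wpM2l (ltW C0) (h _ hs hts)) _.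
by rewrite mulrA [C * _]mulrC divfK ?gt_eqF.
Qed.

Lemma cont_at0_dominated S n nX C eps (d : R -> V) :
  banach S n -> 0 < C -> (forall k, S k -> nX k <= C * n k) -> 0 < eps ->
  (forall t, `|t| < eps -> S (d t)) -> cont_at n eps d 0 -> cont_at nX eps d 0.
Proof.
move=> hS C0 dom eps0 Sd hd e e0.
have [dl [dl0 h]] := hd (e / C) (divr_gt0 e0 C0).
exists dl; split => // s hs hts.
have Sk : S (d s - d 0) by apply: (banach_memB hS (Sd _ hts) (Sd 0 _)); rewrite normr0.
apply: le_lt_trans (dom _ Sk) _.
by rewrite -ltr_pdivlMl // mulrC; apply: h.
Qed.

Lemma line_in_ball S n (P : V -> Prop) x h dl :
  banach S n -> S x -> S h -> 0 < dl ->
  (forall y, S y -> n (y - x) < dl -> P y) ->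
  exists2 d, 0 < d & forall s, `|s| < d -> P (x + s *: h).
Proof.
move=> hS Sx Sh dl0 ball.
have nh1 : 0 < n h + 1 by have := banach_norm_ge0 hS Sh; lra.
exists (dl / (n h + 1)) => [|s]; first by rewrite divr_gt0.
rewrite ltr_pdivlMr // => hs; apply: ball.
  exact: (banach_memD hS Sx (banach_memZ hS s Sh)).
rewrite addrC addKr (banach_normZ hS _ Sh); apply: le_lt_trans hs.
by rewrite ler_wpM2l // lerDl.
Qed.

Lemma dense_ext_eq S1 S0 n0 SX nX (L1 L2 : V -> V) K1 K2 :
  banach S0 n0 -> banach SX nX -> S1 `<=` S0 ->
  (forall h, S0 h -> forall e, 0 < e -> exists y, S1 y /\ n0 (h - y) < e) ->
  (forall h, S0 h -> SX (L1 h) /\ SX (L2 h)) ->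
  (forall h k, S0 h -> S0 k -> L1 (h - k) = L1 h - L1 k) ->
  (forall h k, S0 h -> S0 k -> L2 (h - k) = L2 h - L2 k) ->
  0 < K1 -> (forall h, S0 h -> nX (L1 h) <= K1 * n0 h) ->
  0 < K2 -> (forall h, S0 h -> nX (L2 h) <= K2 * n0 h) ->
  (forall h, S1 h -> L1 h = L2 h) -> forall h, S0 h -> L1 h = L2 h.
Proof.
move=> h0 hX sub dens SL l1 l2 K10 b1 K20 b2 agr h Sh.
have [SL1 SL2] := SL _ Sh; apply: (banach_eq hX SL1 SL2) => e e0.
have K0 : 0 < K1 + K2 by rewrite addr_gt0.
have [y [S1y hy]] := dens _ Sh _ (divr_gt0 e0 K0).
have S0y := sub _ S1y; have Shy := banach_memB h0 Sh S0y.
have [SL1y SL2y] := SL _ Shy.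
have -> : L1 h - L2 h = L1 (h - y) - L2 (h - y).
  by rewrite l1 // l2 // (agr _ S1y) opprB addrA subrK.
apply: le_trans (banach_normB hX SL1y SL2y) _.
apply: le_trans (lerD (b1 _ Shy) (b2 _ Shy)) _.
by rewrite -mulrDl mulrC -ler_pdivlMr // ltW.
Qed.

Section C1Map.
Variables (S0 : set V) (n0 : V -> R) (SX : set V) (nX : V -> R).
Variables (SY : set V) (nY : V -> R) (D : set V) (F : V -> V) (DF : V -> V -> V).
Hypothesis hF : C1wit S0 n0 SX nX SY nY D F DF.

Lemma C1wit_mem x : D x -> SY (F x).
Proof. by case: hF => [[h _]] _ _ _ _; apply: h. Qed.

Lemma C1wit_memD x h : D x -> SX h -> SY (DF x h).
Proof. by move=> Dx; case: hF => [[_ hD]] _ _ _ _; apply: hD. Qed.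

Lemma C1wit_linB x h k : D x -> SX h -> SX k -> DF x (h - k) = DF x h - DF x k.
Proof.
case: hF => _ lin _ _ _ Dx Sh Sk.
by have := lin _ Dx h k (-1) Sh Sk; rewrite !scaleN1r.
Qed.

Lemma C1wit_bound x : banach SX nX -> D x ->
  exists2 C, 0 < C & forall h, SX h -> nY (DF x h) <= C * nX h.
Proof.
case: hF => _ _ bnd _ _ hX Dx; have [C hC] := bnd _ Dx.
exists (`|C| + 1) => [|h Sh]; first exact: ltr_pwDr.
apply: le_trans (hC _ Sh) _; apply: ler_wpM2r; first exact: (banach_norm_ge0 hX Sh).
by apply: le_trans (ler_norm C) _; rewrite lerDl.
Qed.

End C1Map.

Lemma deriv_at0_chain Sm m SX nX SY nY (D : set V) G DG (z : R -> V) z0 b d0 C :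
  banach Sm m -> banach SX nX -> banach SY nY -> Sm `<=` SX ->
  0 < C -> (forall k, Sm k -> nX k <= C * m k) ->
  C1wit Sm m SX nX SY nY D G DG -> D z0 -> Sm z0 -> Sm b -> 0 < d0 ->
  (forall s, `|s| < d0 -> D (z s) /\ Sm (z s)) ->
  deriv_at0 m (fun s => z s - z0) b ->
  deriv_at0 nY (fun s => G (z s) - G z0) (DG z0 b).
Proof.
move=> hm hX hY sub C0 dom hG Dz0 Sz0 Sb d00 hz zb e e0.
have [[SG SDG] lin _ dif _] := hG.
have [K K0 hK] := C1wit_bound hG hX Dz0.
have [d1 d10 hd1] :=
  deriv_at0_bound hm Sb d00 (fun s hs => banach_memB hm (hz s hs).2 Sz0) zb.
pose B := 1 + m b.
have B0 : 0 < B by have := banach_norm_ge0 hm Sb; rewrite /B; lra.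
have e2 : 0 < e / 2 by rewrite divr_gt0.
have [dG [dG0 hdG]] := dif _ Dz0 _ (divr_gt0 e2 B0).
have [d2 d20 hd2] := zb _ (divr_gt0 e2 (mulr_gt0 K0 C0)).
exists (Num.min d0 (Num.min d1 (Num.min d2 (dG / B)))) => [|s].
  by rewrite !lt_min d00 d10 d20 divr_gt0.
rewrite !lt_min => /and4P [sd0 sd1 sd2 sdG].
have [Dzs Szs] := hz _ sd0.
have Sk1 : Sm (z s - z0) := banach_memB hm Szs Sz0.
have Sk : Sm (z s - z0 - s *: b) := banach_memB hm Sk1 (banach_memZ hm s Sb).
have close : m (z s - z0) < dG.
  by apply: le_lt_trans (hd1 _ sd1) _; rewrite mulrC -ltr_pdivlMr.
have -> : G (z s) - G z0 - s *: DG z0 b =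
    (G (z s) - G z0 - DG z0 (z s - z0)) + DG z0 (z s - z0 - s *: b).
  by have := lin _ Dz0 _ _ (- s) (sub _ Sk1) (sub _ Sb); rewrite !scaleNr => ->;
     rewrite addrA subrK.
apply: le_trans (banach_normD hY _ _) _.
- exact: (banach_memB hY (banach_memB hY (SG _ Dzs) (SG _ Dz0)) (SDG _ Dz0 _ (sub _ Sk1))).
- exact: (SDG _ Dz0 _ (sub _ Sk)).
rewrite [e]splitr mulrDl; apply: lerD.
- apply: le_trans (hdG _ Dzs close) _.
  apply: le_trans (ler_wpM2l (ltW (divr_gt0 e2 B0)) (hd1 _ sd1)) _.
  by rewrite mulrA divfK ?gt_eqF.
- apply: le_trans (hK _ (sub _ Sk)) _; apply: le_trans (ler_wpM2l (ltW K0) (dom _ Sk)) _.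
  apply: le_trans (ler_wpM2l (ltW K0) (ler_wpM2l (ltW C0) (hd2 _ sd2))) _.
  by rewrite mulrA mulrA [_ * (e / 2 / _)]mulrC divfK // mulf_neq0 ?gt_eqF.
Qed.

End LineDerivatives.

Section KernelTangentVectors.
Context {R : realType} {V : normedModType R} {T : Type}.
Variables (SX : set V) (nX : V -> R) (S0 : set V) (n0 : V -> R).
Variables (S1 : set V) (n1 : V -> R).
Variables (M : set T) (O : set (set T)) (M0 : set T) (O0 : set (set T)).
Variables (M1 : set T) (O1 : set (set T)).
Variables (A : set (set T * (T -> V))) (eta : T).
Hypothesis HM0 : embedded M O SX nX A M0 O0 S0 n0.
Hypothesis HM1 : embedded M0 O0 S0 n0 (restr_charts A M0) M1 O1 S1 n1.
Hypothesis Heta : M1 eta.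

Lemma banach_SX : banach SX nX.
Proof. by case: HM0 => [[[]]]. Qed.

Lemma banach_S0 : banach S0 n0.
Proof. by case: HM0 => _ []. Qed.

Lemma banach_S1 : banach S1 n1.
Proof. by case: HM1 => _ []. Qed.

Lemma S0_sub_SX : S0 `<=` SX.
Proof. by case: HM0 => _ []. Qed.

Lemma S1_sub_S0 : S1 `<=` S0.
Proof. by case: HM1 => _ []. Qed.

Lemma S1_dense : forall h, S0 h -> forall e, 0 < e -> exists y, S1 y /\ n0 (h - y) < e.
Proof. by case: HM1 => _ []. Qed.

Lemma nX_dominated : exists2 C, 0 < C & forall x, S0 x -> nX x <= C * n0 x.
Proof. by case: HM0 => _ [_ _ _ _ [C []]]; exists C. Qed.

Lemma n0_dominated : exists2 C, 0 < C & forall x, S1 x -> n0 x <= C * n1 x.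
Proof. by case: HM1 => _ [_ _ _ _ [C []]]; exists C. Qed.

Lemma M1_sub_M0 : M1 `<=` M0.
Proof. by case: HM1 => _ _ []. Qed.

Lemma eta_M0 : M0 eta.
Proof. exact: M1_sub_M0. Qed.

Lemma chart_A c : A c -> chart M O SX nX c.
Proof. by case: HM0 => [[_ _ h]] _ _ _ _; apply: h. Qed.

Lemma chart0_restr c p : A c -> M0 p -> c.1 p -> chart M0 O0 S0 n0 (c.1 `&` M0, c.2).
Proof. by case: HM0 => _ _ _ [_ h] _ Ac Mp cp; apply: h Mp Ac cp. Qed.

Lemma chart1_restr c p : A c -> M1 p -> c.1 p ->
  chart M1 O1 S1 n1 (c.1 `&` M0 `&` M1, c.2).
Proof.
case: HM1 => _ _ _ [_ h] _ Ac Mp cp.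
by apply: (h p (c.1 `&` M0, c.2) Mp) => //; [exists c | split => //; apply: M1_sub_M0].
Qed.

Lemma chart_valX c p : A c -> c.1 p -> SX (c.2 p).
Proof. by move=> /chart_A [_ _ h _] /h. Qed.

Lemma chart_val0 c p : A c -> M0 p -> c.1 p -> S0 (c.2 p).
Proof. by move=> Ac Mp cp; case: (chart0_restr Ac Mp cp) => _ _ h _; apply: h. Qed.

Lemma chart_val1 c p : A c -> M1 p -> c.1 p -> S1 (c.2 p).
Proof.
move=> Ac Mp cp; case: (chart1_restr Ac Mp cp) => _ _ h _; apply: h.
by split => //; split => //; apply: M1_sub_M0.
Qed.

Lemma open0_restr U : O U -> O0 (U `&` M0).
Proof. by case: HM0 => _ _ [_ h] _ _; apply: h. Qed.

Lemma open1_restr U : O0 U -> O1 (U `&` M1).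
Proof. by case: HM1 => _ _ [_ h] _ _; apply: h. Qed.

Lemma chart_open_inter c c' c'' : A c -> A c' -> A c'' -> O (c.1 `&` c'.1 `&` c''.1).
Proof.
move=> /chart_A [Oc _ _ _] /chart_A [Oc' _ _ _] /chart_A [Oc'' _ _ _].
case: HM0 => [[[_ [_ _ _ OI] _] _ _]] _ _ _ _.
exact: (OI _ _ (OI _ _ Oc Oc') Oc'').
Qed.

Definition dom0 (a b : set T * (T -> V)) := a.2 @` (a.1 `&` b.1 `&` M0).

Definition dom1 (a b : set T * (T -> V)) := a.2 @` ((a.1 `&` M0) `&` (b.1 `&` M0) `&` M1).

Definition transition0 a b F DF :=
  (forall p, a.1 p -> b.1 p -> M0 p -> F (a.2 p) = b.2 p) /\
  C1wit S0 n0 SX nX SX nX (dom0 a b) F DF.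

Definition transition1 a b F DF :=
  (forall p, (a.1 `&` M0) p -> (b.1 `&` M0) p -> M1 p -> F (a.2 p) = b.2 p) /\
  C1wit S1 n1 S0 n0 S0 n0 (dom1 a b) F DF.

Lemma transition0_exists a b : A a -> A b -> a.1 eta -> b.1 eta ->
  exists F DF, transition0 a b F DF.
Proof.
case: HM0 => _ _ _ _ h Aa Ab ae be.
by have [[F [eF [DF hF]]] _] := h eta a b eta_M0 Aa Ab ae be; exists F, DF.
Qed.

Lemma transition1_exists a b : A a -> A b -> a.1 eta -> b.1 eta ->
  exists F DF, transition1 a b F DF.
Proof.
case: HM1 => _ _ _ _ h Aa Ab ae be.
have [[F [eF [DF hF]]] _] := h eta (a.1 `&` M0, a.2) (b.1 `&` M0, b.2) Heta
  (ex_intro2 _ _ a Aa erefl) (ex_intro2 _ _ b Ab erefl) (conj ae eta_M0) (conj be eta_M0).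
by exists F, DF.
Qed.

Lemma transition1_val a b F DF p : transition1 a b F DF ->
  a.1 p -> b.1 p -> M1 p -> F (a.2 p) = b.2 p.
Proof. by case=> eF _ ap bp mp; have M0p := M1_sub_M0 mp; apply: eF. Qed.

Lemma dom0P a b p : a.1 p -> b.1 p -> M0 p -> dom0 a b (a.2 p).
Proof. by move=> ap bp mp; exists p. Qed.

Lemma dom1P a b p : a.1 p -> b.1 p -> M1 p -> dom1 a b (a.2 p).
Proof. by move=> ap bp mp; have M0p := M1_sub_M0 mp; exists p. Qed.

Lemma dom0_S0 a b x : A a -> dom0 a b x -> S0 x.
Proof. by move=> Aa [p [[ap _] mp] <-]; apply: chart_val0. Qed.

Lemma dom1_S1 a b x : A a -> dom1 a b x -> S1 x.
Proof. by move=> Aa [p [[[ap _] _] mp] <-]; apply: chart_val1. Qed.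

Lemma transition0_id c : A c -> transition0 c c id (fun _ h => h).
Proof.
move=> Ac; split => //; split.
- by split => // x /(dom0_S0 Ac)/S0_sub_SX.
- by [].
- by move=> x _; exists 1 => h _; rewrite mul1r.
- move=> x0 Dx0 e e0; exists 1; split => // x Dx _.
  rewrite subrr (banach_norm0 banach_SX); apply: mulr_ge0; first exact: ltW.
  exact: (banach_norm_ge0 banach_S0 (banach_memB banach_S0 (dom0_S0 Ac Dx) (dom0_S0 Ac Dx0))).
- move=> x0 Dx0 e e0; exists 1; split => // x Dx _ h Sh.
  rewrite subrr (banach_norm0 banach_SX); apply: mulr_ge0; first exact: ltW.
  exact: (banach_norm_ge0 banach_SX Sh).
Qed.

Lemma line1_in_charts a b e h : A a -> A b -> A e -> a.1 eta -> b.1 eta -> e.1 eta ->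
  S1 h -> exists2 d, 0 < d & forall s, `|s| < d ->
    exists2 p, [/\ a.1 p, b.1 p, e.1 p & M1 p] & a.2 p = a.2 eta + s *: h.
Proof.
move=> Aa Ab Ae ae be ee Sh.
have [_ _ _ open1] := chart1_restr Aa Heta ae.
pose W := a.1 `&` b.1 `&` e.1 `&` M0 `&` M1.
have subW : W `<=` a.1 `&` M0 `&` M1 by move=> p [[[[ap _] _] mp] m1p].
have OW : O1 W by apply: open1_restr; apply: open0_restr; apply: chart_open_inter.
have [_ ball] := (open1 W subW).1 OW.
have [|dl [dl0 hdl]] := ball (a.2 eta).
  by exists eta => //; split; [split; [split; [split|]|]|] => //; apply: eta_M0.
have [d d0 hd] := line_in_ball banach_S1 (chart_val1 Aa Heta ae) Sh dl0 hdl.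
by exists d => // s /hd [p [[[[ap bp] ep] _] m1p] <-]; exists p.
Qed.

Lemma line0_in_chart b w : A b -> b.1 eta -> S0 w ->
  exists2 d, 0 < d & forall s, `|s| < d ->
    exists2 p, b.1 p /\ M0 p & b.2 p = b.2 eta + s *: w.
Proof.
move=> Ab be Sw.
have [Ob _ _ _] := chart_A Ab.
have [_ _ _ open0] := chart0_restr Ab eta_M0 be.
have [_ ball] := (open0 _ (@subset_refl _ (b.1 `&` M0))).1 (open0_restr Ob).
have [|dl [dl0 hdl]] := ball (b.2 eta); first by exists eta => //; split => //; apply: eta_M0.
have [d d0 hd] := line_in_ball banach_S0 (chart_val0 Ab eta_M0 be) Sw dl0 hdl.
by exists d => // s /hd [p bp <-]; exists p.
Qed.

Lemma transition0_deriv_line a e F DF x h d : A a -> transition0 a e F DF ->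
  dom0 a e x -> S0 h -> 0 < d -> (forall s, `|s| < d -> dom0 a e (x + s *: h)) ->
  deriv_at0 nX (fun s => F (x + s *: h) - F x) (DF x h).
Proof.
move=> Aa [_ hF] Dx Sh d0 line; have [C C0 dom] := nX_dominated.
apply: (deriv_at0_chain (z := fun s => x + s *: h) (d0 := d) banach_S0 banach_SX
  banach_SX S0_sub_SX C0 dom hF Dx) => //.
- exact: dom0_S0 Aa Dx.
- by move=> s /line Ds; split => //; apply: dom0_S0 Aa Ds.
- exact: deriv_at0_line (banach_norm0 banach_S0).
Qed.

Lemma transition1_deriv_line a e F DF x h d : A a -> transition1 a e F DF ->
  dom1 a e x -> S1 h -> 0 < d -> (forall s, `|s| < d -> dom1 a e (x + s *: h)) ->
  deriv_at0 n0 (fun s => F (x + s *: h) - F x) (DF x h).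
Proof.
move=> Aa [_ hF] Dx Sh d0 line; have [C C0 dom] := n0_dominated.
apply: (deriv_at0_chain (z := fun s => x + s *: h) (d0 := d) banach_S1 banach_S0
  banach_S0 S1_sub_S0 C0 dom hF Dx) => //.
- exact: dom1_S1 Aa Dx.
- by move=> s /line Ds; split => //; apply: dom1_S1 Aa Ds.
- exact: deriv_at0_line (banach_norm0 banach_S1).
Qed.

Lemma transition_derivs_agree a b F DF F1 DF1 : A a -> A b -> a.1 eta -> b.1 eta ->
  transition0 a b F DF -> transition1 a b F1 DF1 ->
  forall h, S1 h -> DF (a.2 eta) h = DF1 (a.2 eta) h.
Proof.
move=> Aa Ab ae be tF tF1 h Sh.
have [[eF hF] [_ hF1]] := (tF, tF1).
have [d d0 line] := line1_in_charts Aa Ab Ab ae be be Sh.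
have Dx := dom0P ae be eta_M0; have Dx1 := dom1P ae be Heta.
have [line0 line1] : (forall s, `|s| < d -> dom0 a b (a.2 eta + s *: h)) /\
                     (forall s, `|s| < d -> dom1 a b (a.2 eta + s *: h)).
  split=> s /line [p [ap bp _ m1p] <-]; last exact: dom1P.
  exact: dom0P (M1_sub_M0 m1p).
have der := transition0_deriv_line Aa tF Dx (S1_sub_S0 Sh) d0 line0.
have [C C0 dom] := nX_dominated.
have der1 := deriv_at0_dominated banach_S0 C0 dom (C1wit_memD hF1 Dx1 (S1_sub_S0 Sh)) d0
  (fun s hs => banach_memB banach_S0 (C1wit_mem hF1 (line1 s hs)) (C1wit_mem hF1 Dx1))
  (transition1_deriv_line Aa tF1 Dx1 Sh d0 line1).
apply: (deriv_at0_unique banach_SX _ _ d0 _ der der1).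
- exact: (C1wit_memD hF Dx (S0_sub_SX (S1_sub_S0 Sh))).
- exact: (S0_sub_SX (C1wit_memD hF1 Dx1 (S1_sub_S0 Sh))).
move=> s /line [p [ap bp _ m1p] <-]; have [M0p M0e] := (M1_sub_M0 m1p, eta_M0).
rewrite /= (eF _ ap bp M0p) (eF _ ae be M0e).
rewrite !(transition1_val tF1) //.
split=> //; exact: (banach_memB banach_SX (chart_valX Ab bp) (chart_valX Ab be)).
Qed.

Lemma transition0_chain_S1 a b e G DG F' DF' F DF :
  A a -> A b -> A e -> a.1 eta -> b.1 eta -> e.1 eta ->
  transition0 a b G DG -> transition0 b e F' DF' -> transition0 a e F DF ->
  forall h, S1 h -> DF (a.2 eta) h = DF' (b.2 eta) (DG (a.2 eta) h).
Proof.
move=> Aa Ab Ae ae be ee tG [eF' hF'] tF h Sh.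
have [G1 [DG1 tG1]] := transition1_exists Aa Ab ae be.
rewrite (transition_derivs_agree Aa Ab ae be tG tG1 Sh).
have [[eF hF] [_ hG1]] := (tF, tG1).
have [d d0 line] := line1_in_charts Aa Ab Ae ae be ee Sh.
have Dx := dom0P ae ee eta_M0; have Dx1 := dom1P ae be Heta.
have G1x : G1 (a.2 eta) = b.2 eta by rewrite (transition1_val tG1).
have [line0 line1] : (forall s, `|s| < d -> dom0 a e (a.2 eta + s *: h)) /\
                     (forall s, `|s| < d -> dom1 a b (a.2 eta + s *: h)).
  split=> s /line [p [ap bp ep m1p] <-]; last exact: dom1P.
  exact: dom0P (M1_sub_M0 m1p).
have der := transition0_deriv_line Aa tF Dx (S1_sub_S0 Sh) d0 line0.
have der1 := transition1_deriv_line Aa tG1 Dx1 Sh d0 line1.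
have Dy : dom0 b e (G1 (a.2 eta)) by rewrite G1x; apply: dom0P eta_M0.
have [C C0 dom] := nX_dominated.
have line' : forall s, `|s| < d ->
    dom0 b e (G1 (a.2 eta + s *: h)) /\ S0 (G1 (a.2 eta + s *: h)).
  move=> s /line [p [ap bp ep m1p] <-]; have M0p := M1_sub_M0 m1p.
  by rewrite (transition1_val tG1) //; split; [apply: dom0P | apply: chart_val0].
have der' := deriv_at0_chain (z := fun s => G1 (a.2 eta + s *: h)) banach_S0 banach_SX
  banach_SX S0_sub_SX C0 dom hF' Dy (C1wit_mem hG1 Dx1)
  (C1wit_memD hG1 Dx1 (S1_sub_S0 Sh)) d0 line' der1.
rewrite -G1x; apply: (deriv_at0_unique banach_SX _ _ d0 _ der der').
- exact: (C1wit_memD hF Dx (S0_sub_SX (S1_sub_S0 Sh))).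
- exact: (C1wit_memD hF' Dy (S0_sub_SX (C1wit_memD hG1 Dx1 (S1_sub_S0 Sh)))).
move=> s /line [p [ap bp ep m1p] <-]; have [M0p M0e] := (M1_sub_M0 m1p, eta_M0).
rewrite /= !(transition1_val tG1) // (eF _ ap ep M0p) (eF _ ae ee M0e).
rewrite (eF' _ bp ep M0p) (eF' _ be ee M0e); split=> //.
exact: (banach_memB banach_SX (chart_valX Ae ep) (chart_valX Ae ee)).
Qed.

Lemma transition0_chain a b e G DG F' DF' F DF :
  A a -> A b -> A e -> a.1 eta -> b.1 eta -> e.1 eta ->
  transition0 a b G DG -> transition0 b e F' DF' -> transition0 a e F DF ->
  forall h, S0 h -> DF (a.2 eta) h = DF' (b.2 eta) (DG (a.2 eta) h).
Proof.
move=> Aa Ab Ae ae be ee tG tF' tF.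
have [_ hG] := tG; have [_ hF'] := tF'; have [_ hF] := tF.
have Dx := dom0P ae ee eta_M0; have Dxb := dom0P ae be eta_M0.
have Dy := dom0P be ee eta_M0.
have [C C0 dom] := nX_dominated.
have [K1 K10 hK1] := C1wit_bound hF banach_SX Dx.
have [K2 K20 hK2] := C1wit_bound hF' banach_SX Dy.
have [K3 K30 hK3] := C1wit_bound hG banach_SX Dxb.
have DGX h : S0 h -> SX (DG (a.2 eta) h) by move=> /S0_sub_SX; apply: (C1wit_memD hG Dxb).
apply: (dense_ext_eq banach_S0 banach_SX S1_sub_S0 S1_dense _ _ _
  (mulr_gt0 K10 C0) _ (mulr_gt0 K20 (mulr_gt0 K30 C0)) _
  (transition0_chain_S1 Aa Ab Ae ae be ee tG tF' tF)).
- move=> h Sh; split; first exact: (C1wit_memD hF Dx (S0_sub_SX Sh)).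
  exact: (C1wit_memD hF' Dy (DGX _ Sh)).
- by move=> h k Sh Sk; rewrite (C1wit_linB hF Dx (S0_sub_SX Sh) (S0_sub_SX Sk)).
- move=> h k Sh Sk; rewrite (C1wit_linB hG Dxb (S0_sub_SX Sh) (S0_sub_SX Sk)).
  by rewrite (C1wit_linB hF' Dy (DGX _ Sh) (DGX _ Sk)).
- move=> h Sh; apply: le_trans (hK1 _ (S0_sub_SX Sh)) _.
  by rewrite -mulrA ler_pM2l // dom.
- move=> h Sh; apply: le_trans (hK2 _ (DGX _ Sh)) _.
  rewrite -mulrA ler_pM2l //; apply: le_trans (hK3 _ (S0_sub_SX Sh)) _.
  by rewrite -mulrA ler_pM2l // dom.
Qed.

Lemma transition0_deriv_mem0 a e F DF : A a -> A e -> a.1 eta -> e.1 eta ->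
  transition0 a e F DF -> forall h, S0 h -> S0 (DF (a.2 eta) h).
Proof.
move=> Aa Ae ae ee tF h Sh.
have [F1 [DF1 tF1]] := transition1_exists Aa Ae ae ee.
have [[_ hF] [_ hF1]] := (tF, tF1).
have Dx := dom0P ae ee eta_M0; have Dx1 := dom1P ae ee Heta.
have [C C0 dom] := nX_dominated.
have [K1 K10 hK1] := C1wit_bound hF banach_SX Dx.
have [K2 K20 hK2] := C1wit_bound hF1 banach_S0 Dx1.
suff -> : DF (a.2 eta) h = DF1 (a.2 eta) h by apply: (C1wit_memD hF1 Dx1 Sh).
apply: (dense_ext_eq banach_S0 banach_SX S1_sub_S0 S1_dense _ _ _
  (mulr_gt0 K10 C0) _ (mulr_gt0 C0 K20) _ (transition_derivs_agree Aa Ae ae ee tF tF1)) => //.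
- move=> k Sk; split; first exact: (C1wit_memD hF Dx (S0_sub_SX Sk)).
  exact: (S0_sub_SX (C1wit_memD hF1 Dx1 Sk)).
- by move=> k l Sk Sl; rewrite (C1wit_linB hF Dx (S0_sub_SX Sk) (S0_sub_SX Sl)).
- by move=> k l Sk Sl; rewrite (C1wit_linB hF1 Dx1 Sk Sl).
- move=> k Sk; apply: le_trans (hK1 _ (S0_sub_SX Sk)) _.
  by rewrite -mulrA ler_pM2l // dom.
- move=> k Sk; apply: le_trans (dom _ (C1wit_memD hF1 Dx1 Sk)) _.
  by rewrite -mulrA ler_pM2l // hK2.
Qed.

Definition curve0 c (f : R -> T) eps (d : R -> V) :=
  [/\ (forall t, `|t| < eps -> M0 (f t) /\ c.1 (f t)),
      (forall t, `|t| < eps -> S0 (d t)),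
      deriv_on n0 eps (fun t => c.2 (f t)) d &
      (forall t, `|t| < eps -> cont_at n0 eps d t)].

Lemma tmapE e f v : tmap A M0 S0 n0 SX nX eta e f v <->
  f 0 = eta /\ exists c d, [/\ A c, c.1 eta, C1_at0 SX nX c f d &
    exists F DF, transition0 c e F DF /\ v = DF (c.2 eta) (d 0)].
Proof.
split=> [[f0 [c [d [Ac ce fd [F [DF [eF hF ->]]]]]]] |
         [f0 [c [d [Ac ce fd [F [DF [[eF hF] ->]]]]]]]];
  split=> //; exists c, d; split=> //; exists F, DF.
- split=> //; split=> [p cp ep|]; first exact: eF.
  by rewrite /dom0 [c.1 `&` _]setIC.
- split=> [p ep cp| |//]; first exact: eF.
  by move: hF; rewrite /dom0 [c.1 `&` _]setIC.
Qed.

Lemma curve0_deriv_chart a c f eps d d' G DG :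
  A a -> A c -> a.1 eta -> c.1 eta -> f 0 = eta -> 0 < eps ->
  curve0 a f eps d -> C1_at0 SX nX c f d' -> transition0 a c G DG ->
  d' 0 = DG (a.2 eta) (d 0).
Proof.
move=> Aa Ac ae ce f0 eps0 [fM Sd fd _] [eps' [eps'0 [fc Sd' fd' _]]] [eG hG].
have Sd0 : S0 (d 0) by apply: Sd; rewrite normr0.
have [C C0 dom] := nX_dominated.
have d00 : 0 < Num.min eps eps' by rewrite lt_min eps0 eps'0.
have line s : `|s| < Num.min eps eps' -> dom0 a c (a.2 (f s)) /\ S0 (a.2 (f s)).
  rewrite lt_min => /andP [s1 s2]; have [mf af] := fM s s1.
  by split; [apply: dom0P (fc s s2) mf | apply: chart_val0].
have derG := deriv_at0_chain (z := fun s => a.2 (f s)) banach_S0 banach_SX banach_SX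
  S0_sub_SX C0 dom hG (dom0P ae ce eta_M0) (chart_val0 Aa eta_M0 ae) Sd0 d00 line.
have := deriv_on_at0 eps0 fd; rewrite /= f0 => /derG {}derG.
have := deriv_on_at0 eps'0 fd'; rewrite /= f0 => derc.
apply: (deriv_at0_unique banach_SX _ (C1wit_memD hG (dom0P ae ce eta_M0) (S0_sub_SX Sd0))
  d00 _ derc derG); first by apply: Sd'; rewrite normr0.
move=> s; rewrite lt_min => /andP [s1 s2]; have [mf af] := fM s s1.
rewrite /= (eG _ af (fc s s2) mf) (eG _ ae ce eta_M0); split=> //.
exact: (banach_memB banach_SX (chart_valX Ac (fc s s2)) (chart_valX Ac ce)).
Qed.

Lemma tmap_curve0 a e f eps d F DF :
  A a -> A e -> a.1 eta -> e.1 eta -> f 0 = eta -> 0 < eps ->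
  curve0 a f eps d -> transition0 a e F DF ->
  forall v, tmap A M0 S0 n0 SX nX eta e f v <-> v = DF (a.2 eta) (d 0).
Proof.
move=> Aa Ae ae ee f0 eps0 fa tF v; rewrite tmapE.
have [fM Sd fd fc] := fa; have Sd0 : S0 (d 0) by apply: Sd; rewrite normr0.
split=> [[_ [c [d' [Ac ce fd' [F' [DF' [tF' ->]]]]]]] | ->].
  have [G [DG tG]] := transition0_exists Aa Ac ae ce.
  rewrite (curve0_deriv_chart Aa Ac ae ce f0 eps0 fa fd' tG).
  by rewrite (transition0_chain Aa Ac Ae ae ce ee tG tF' tF).
have [C C0 dom] := nX_dominated.
split=> //; exists a, d; split=> //; last by exists F, DF.
exists eps; split=> //; split.
- by move=> t /fM [].
- by move=> t /Sd /S0_sub_SX.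
- by apply: (deriv_on_dominated banach_S0 C0 dom _ Sd fd) => t /fM [mf af];
    apply: chart_val0.
- by apply: (cont_at0_dominated banach_S0 C0 dom eps0 Sd (fc 0 _)); rewrite normr0.
Qed.

Lemma curve0_line b w : A b -> b.1 eta -> S0 w ->
  exists g eps, [/\ g 0 = eta, 0 < eps & curve0 b g eps (fun _ => w)].
Proof.
move=> Ab be Sw; have [d d0 line] := line0_in_chart Ab be Sw.
pose on_line t p := `|t| < d -> (b.1 p /\ M0 p) /\ b.2 p = b.2 eta + t *: w.
have [g hg] : {g : R -> T & forall t, on_line t (g t)}.
  apply: choice => t; have [/line [p bp ep]|td] := boolP (`|t| < d).
    by exists p.
  by exists eta => /(negP td).
have [_ b_inj _ _] := chart_A Ab.
have g0 : g 0 = eta.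
  have [|[bg _] eg] := hg 0; first by rewrite normr0.
  by apply: b_inj => //; rewrite eg scale0r addr0.
exists g, d; split=> //; split=> //.
- by move=> t /hg [[]].
- move=> t ht e e0; exists 1; split=> // s _ hts.
  rewrite (hg _ hts).2 (hg _ ht).2 scalerDl addrA; set x := _ + t *: w.
  rewrite [x + _]addrC addrK subrr (banach_norm0 banach_S0).
  by apply: mulr_ge0; [apply: ltW|].
- move=> t _ e e0; exists 1; split=> // s _ _.
  by rewrite subrr (banach_norm0 banach_S0).
Qed.

Lemma tvec_curve0_eq a b f g epsf epsg df dg F DF :
  A a -> A b -> a.1 eta -> b.1 eta -> f 0 = eta -> g 0 = eta -> 0 < epsf -> 0 < epsg ->
  curve0 a f epsf df -> curve0 b g epsg dg -> transition0 a b F DF ->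
  dg 0 = DF (a.2 eta) (df 0) ->
  tvec A M0 S0 n0 SX nX eta f = tvec A M0 S0 n0 SX nX eta g.
Proof.
move=> Aa Ab ae be f0 g0 epsf0 epsg0 fa gb tF dgdf.
have Sdf : S0 (df 0) by case: fa => _ Sd _ _; apply: Sd; rewrite normr0.
have same e v : A e -> e.1 eta ->
    tmap A M0 S0 n0 SX nX eta e f v <-> tmap A M0 S0 n0 SX nX eta e g v.
  move=> Ae ee.
  have [Fa [DFa tFa]] := transition0_exists Aa Ae ae ee.
  have [Fb [DFb tFb]] := transition0_exists Ab Ae be ee.
  have := tmap_curve0 Ab Ae be ee g0 epsg0 gb tFb v; rewrite dgdf => ->.
  rewrite (tmap_curve0 Aa Ae ae ee f0 epsf0 fa tFa v).
  by rewrite (transition0_chain Aa Ab Ae ae be ee tF tFb tFa).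
by apply/seteqP; split=> k kf e v Ae ee; rewrite -(kf e v Ae ee) same.
Qed.

Lemma tvec_refl f : tvec A M0 S0 n0 SX nX eta f f.
Proof. by []. Qed.

Lemma T0c_sub c c' : A c -> A c' -> c.1 eta -> c'.1 eta ->
  T0c A M0 S0 n0 SX nX eta c `<=` T0c A M0 S0 n0 SX nX eta c'.
Proof.
move=> Ac Ac' ce c'e _ [f [f0 [eps [d [eps0 fc]]]] <-].
have [F [DF tF]] := transition0_exists Ac Ac' ce c'e.
have Sd0 : S0 (d 0) by case: fc => _ Sd _ _; apply: Sd; rewrite normr0.
have Sw := transition0_deriv_mem0 Ac Ac' ce c'e tF Sd0.
have [g [epsg [g0 epsg0 gc']]] := curve0_line Ac' c'e Sw.
exists g; first by split=> //; exists epsg, (fun _ => DF (c.2 eta) (d 0)).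
by rewrite (tvec_curve0_eq Ac Ac' ce c'e f0 g0 eps0 epsg0 fc gc' tF).
Qed.

Lemma T0c_chart_indep c c' : A c -> A c' -> c.1 eta -> c'.1 eta ->
  T0c A M0 S0 n0 SX nX eta c = T0c A M0 S0 n0 SX nX eta c'.
Proof. by move=> Ac Ac' ce c'e; apply/seteqP; split; apply: T0c_sub. Qed.

Lemma T0_eq_T0c c : A c -> c.1 eta ->
  T0 A M0 S0 n0 SX nX eta = T0c A M0 S0 n0 SX nX eta c.
Proof.
move=> Ac ce; apply/seteqP; split=> [x [c' [Ac' c'e]]|x x_c]; last by exists c.
by rewrite (T0c_chart_indep Ac' Ac c'e ce).
Qed.

Lemma tmap_T0_image c : A c -> c.1 eta ->
  [set v | exists f, T0 A M0 S0 n0 SX nX eta (tvec A M0 S0 n0 SX nX eta f) /\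
                     tmap A M0 S0 n0 SX nX eta c f v] = S0.
Proof.
move=> Ac ce; apply/seteqP; split=> [v [f [[c' [Ac' c'e] [f' f'c' f'f]] fv]] | v Sv].
  have [f'0 [eps [d [eps0 fc']]]] := f'c'.
  have [F [DF tF]] := transition0_exists Ac' Ac c'e ce.
  have f'v : tmap A M0 S0 n0 SX nX eta c f' v.
    by have := tvec_refl f'; rewrite f'f => /(_ c v Ac ce) <-.
  rewrite (tmap_curve0 Ac' Ac c'e ce f'0 eps0 fc' tF) in f'v; rewrite f'v.
  by apply: (transition0_deriv_mem0 Ac' Ac c'e ce tF); case: fc' => _ Sd _ _;
    apply: Sd; rewrite normr0.
have [g [eps [g0 eps0 gc]]] := curve0_line Ac ce Sv.
exists g; split.
  by exists c => //; exists g => //; split=> //; exists eps, (fun _ => v).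
exact/(tmap_curve0 Ac Ac ce ce g0 eps0 gc (transition0_id Ac)).
Qed.

End KernelTangentVectors.

Unset Implicit Arguments.

Theorem lemma3p7 (R : realType) (V : normedModType R) (T : Type)
  (St : set V) (nt : V -> R) (SX : set V) (nX : V -> R)
  (S0 : set V) (n0 : V -> R) (S1 : set V) (n1 : V -> R)
  (Mt : set T) (Ot : set (set T)) (M : set T) (O : set (set T))
  (M0 : set T) (O0 : set (set T)) (M1 : set T) (O1 : set (set T))
  (At A : set (set T * (T -> V))) (eta : T)
  (* M0 is a C^1-embedded Banach submanifold of M w.r.t. A *)
  (HM0 : embedded M O SX nX A M0 O0 S0 n0)
  (* inward spreadable, with inner C^1-kernel M1 *)
  (HM1 : embedded M0 O0 S0 n0 (restr_charts A M0) M1 O1 S1 n1)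
  (* outward spreadable *)
  (HMt : embedded Mt Ot St nt At M O SX nX)
  (HA : A = restr_charts At M)
  (Heta : M1 eta) :
  (forall c c', A c -> A c' -> c.1 eta -> c'.1 eta ->
     T0c A M0 S0 n0 SX nX eta c = T0c A M0 S0 n0 SX nX eta c') /\
  (forall c, A c -> c.1 eta ->
     T0 A M0 S0 n0 SX nX eta = T0c A M0 S0 n0 SX nX eta c /\
     [set v | exists f, T0 A M0 S0 n0 SX nX eta (tvec A M0 S0 n0 SX nX eta f) /\
                        tmap A M0 S0 n0 SX nX eta c f v] = S0).
Proof.
split=> [c c' Ac Ac' ce c'e | c Ac ce].
  exact: (T0c_chart_indep HM0 HM1 Heta Ac Ac' ce c'e).
split; first exact: (T0_eq_T0c HM0 HM1 Heta Ac ce).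
exact: (tmap_T0_image HM0 HM1 Heta Ac ce).
Qed.
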